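(* Let $d\ge2$ and $n\in\mathbb N_0$. Every $Z\in\mathcal V_n^d(\mathsf w_{-1,-1})$ satisfies $$\mathcal D_{-1}Z=-n(n+d-2)\,Z.$$ Moreover, $\mathcal V_n^d(\mathsf w_{-1,-1})=\mathcal H_n^{d,0}\oplus(1-t)\,\mathcal V_{n-1}^d(\mathsf w_{-1,1})$ (with the second summand $\{0\}$ when $n=0$).
   Context: Cone points $(x,t)=(t\xi,t)$, $\xi\in\mathbb S^{d-1}$. $\mathcal D_\gamma=t(1-t)\frac{\partial^2}{\partial t^2}+\big(d-1-(d+\gamma)t\big)\frac{\partial}{\partial t}+t^{-1}\Delta_0^{(\xi)}$, acting on functions of $(t,\xi)$, $t$-derivatives at fixed $\xi$, $\Delta_0^{(\xi)}$ the Laplace–Beltrami operator on $\mathbb S^{d-1}$. $\mathcal H_m^{d,0}$: homogeneous harmonic polynomials of degree $m$ on $\mathbb R^d$, with basis $\{Y_\ell^m\}$ orthonormal on $\mathbb S^{d-1}$ for normalized surface measure. Jacobi polynomials for real parameters: $P_n^{(\alpha,\beta)}(u)=\sum_{k=0}^n\frac{(\alpha+k+1)_{n-k}(-n)_k(n+\alpha+\beta+1)_k}{n!\,k!}(\frac{1-u}{2})^k$; $A_n^{(\alpha,\beta)}=2^n/(n+\alpha+\beta+1)_n$; $\widehat P_n^{(\alpha,\beta)}=A_n^{(\alpha,\beta)}P_n^{(\alpha,\beta)}$. $J_n^{(\alpha,-1)}(u)=1$ for $n=0$ and $J_n^{(\alpha,-1)}(u)=\int_{-1}^u\widehat P_{n-1}^{(\alpha+1,0)}(w)\mathrm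 dw$ for $n\ge1$. $\mathcal V_n^d(\mathsf w_{-1,-1})$ is the span of $\{J_{n-m}^{(2m+d-2,-1)}(1-2t)Y_\ell^m(x):0\le m\le n,\ \ell\}$ (the Sobolev orthogonal polynomials of degree $n$ for $\beta=-1$, $s=1$), and $\mathcal V_k^d(\mathsf w_{-1,1})$ is the span of $\{P_{k-m}^{(2m+d-2,1)}(1-2t)Y_\ell^m(x):0\le m\le k,\ \ell\}$ (the orthogonal polynomials of degree $k$ on the cone for the weight $t^{-1}(1-t)$); all as functions on the cone. *)

From HB Require Import structures.
From mathcomp Require Import all_boot all_order all_algebra.
From mathcomp Require Import all_classical all_reals all_analysis.
Set Implicit Arguments. Unset Strict Implicit. Unset Printing Implicit Defensive.
Import Order.TTheory GRing.Theory Num.Theory numFieldNormedType.Exports.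
Local Open Scope classical_set_scope.
Local Open Scope ring_scope.

Section Defs.
Variable R : realType.

Definition poch (a : R) (k : nat) : R := \prod_(i < k) (a + i%:R).

Definition jacobiP (al be : R) (n : nat) (u : R) : R :=
  \sum_(k < n.+1)
    poch (al + k%:R + 1) (n - k) * poch (- n%:R) k * poch (n%:R + al + be + 1) k
    / (n`! * k`!)%:R * ((1 - u) / 2) ^+ k.

Definition jacobiA (al be : R) (n : nat) : R := 2 ^+ n / poch (n%:R + al + be + 1) n.

Definition jacobiPhat (al be : R) (n : nat) (u : R) : R :=
  jacobiA al be n * jacobiP al be n u.

Definition oint (a b : R) (f : R -> R) : R :=
  if a <= b then (\int[lebesgue_measure]_(w in `[a, b]) f w)
  else - (\int[lebesgue_measure]_(w in `[b, a]) f w).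

Definition jacobiJ (al : R) (n : nat) (u : R) : R :=
  match n with
  | 0 => 1
  | n'.+1 => oint (-1) u (jacobiPhat (al + 1) 0 n')
  end.

Variable d : nat.

Definition sqnorm (x : 'rV[R]_d) : R := \sum_(i < d) x ord0 i ^+ 2.
Definition enorm (x : 'rV[R]_d) : R := Num.sqrt (sqnorm x).
Definition on_sphere (xi : 'rV[R]_d) : Prop := sqnorm xi = 1.

Definition evec (i : 'I_d) : 'rV[R]_d := delta_mx ord0 i.

Definition laplacian (f : 'rV[R]_d -> R) (x : 'rV[R]_d) : R :=
  \sum_(i < d) derive (fun y => derive f y (evec i)) x (evec i).

(* Laplace--Beltrami operator on S^{d-1}: Laplacian of the 0-homogeneous
   extension x |-> g (x / |x|), evaluated on the sphere *)
Definition laplaceBeltrami (g : 'rV[R]_d -> R) (xi : 'rV[R]_d) : R :=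
  laplacian (fun x => g ((enorm x)^-1 *: x)) xi.

Definition monomial m (a : {ffun 'I_d -> 'I_m.+1}) (x : 'rV[R]_d) : R :=
  \prod_(i < d) x ord0 i ^+ a i.

Definition homog_poly (m : nat) (Y : 'rV[R]_d -> R) : Prop :=
  exists c : {ffun 'I_d -> 'I_m.+1} -> R,
    forall x, Y x = \sum_(a : {ffun 'I_d -> 'I_m.+1} | (\sum_(i < d) (a i : nat))%N == m)
                      c a * monomial a x.

Definition harmH (m : nat) : set ('rV[R]_d -> R) :=
  [set Y | homog_poly m Y /\ forall x, laplacian Y x = 0].

(* a function on the cone is represented as Z : R -> 'rV_d -> R, Z t xi;
   only its values for 0 <= t <= 1, |xi| = 1 matter *)
Definition cone_eq (Z W : R -> 'rV[R]_d -> R) : Prop :=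
  forall t xi, 0 <= t <= 1 -> on_sphere xi -> Z t xi = W t xi.

Definition Dop (gam : R) (Z : R -> 'rV[R]_d -> R) (t : R) (xi : 'rV[R]_d) : R :=
  t * (1 - t) * derive1 (derive1 (fun s => Z s xi)) t
  + (d%:R - 1 - (d%:R + gam) * t) * derive1 (fun s => Z s xi) t
  + t^-1 * laplaceBeltrami (Z t) xi.

Definition Vmm (n : nat) : set (R -> 'rV[R]_d -> R) :=
  [set Z | exists Y : nat -> 'rV[R]_d -> R,
     (forall m, (m <= n)%N -> harmH m (Y m)) /\
     cone_eq Z (fun t xi => \sum_(m < n.+1)
        jacobiJ ((2 * m + d)%:R - 2) (n - m) (1 - 2 * t) * Y m (t *: xi))].

Definition Vmp (k : nat) : set (R -> 'rV[R]_d -> R) :=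
  [set Z | exists Y : nat -> 'rV[R]_d -> R,
     (forall m, (m <= k)%N -> harmH m (Y m)) /\
     cone_eq Z (fun t xi => \sum_(m < k.+1)
        jacobiP ((2 * m + d)%:R - 2) 1 (k - m) (1 - 2 * t) * Y m (t *: xi))].

Definition Hcone (n : nat) : set (R -> 'rV[R]_d -> R) :=
  [set W | exists Y, harmH n Y /\ cone_eq W (fun t xi => Y (t *: xi))].

Definition second_summand (n : nat) : set (R -> 'rV[R]_d -> R) :=
  match n with
  | 0 => [set W | cone_eq W (fun _ _ => 0)]
  | n'.+1 => [set W | exists Q, Vmp n' Q /\ cone_eq W (fun t xi => (1 - t) * Q t xi)]
  end.

End Defs.

Arguments Vmm {R} d n _.
Arguments Vmp {R} d k _.
Arguments Hcone {R} d n _.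
Arguments second_summand {R} d n _.
Arguments harmH {R} d m _.
Arguments cone_eq {R} d Z W.
Arguments on_sphere {R} d xi.
Arguments Dop {R} d gam Z t xi.
Arguments laplaceBeltrami {R} d g xi.
Arguments laplacian {R} d f x.

From HB Require Import structures.
From mathcomp Require Import all_boot all_order all_algebra.
From mathcomp Require Import all_classical all_reals all_analysis.
From mathcomp Require Import ring lra zify.
Set Implicit Arguments. Unset Strict Implicit. Unset Printing Implicit Defensive.
Import Order.TTheory GRing.Theory Num.Theory numFieldNormedType.Exports.
Local Open Scope classical_set_scope.
Local Open Scope ring_scope.

(* Everything rests on one identity, for al >= 0:
     J_{k+1}^{(al,-1)}(1 - 2t) = c_k (1 - t) P_k^{(al,1)}(1 - 2t),  c_k <> 0,
   obtained by integrating d/ds[(1 - s) P_k^{(al,1)}] = -(k+1) P_k^{(al+1,0)}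
   (Jacobi polynomials written in s = (1 - u)/2), itself a coefficientwise
   consequence of the hypergeometric sums.
   - The decomposition follows directly: the term m = n of a member of V_n is
     the harmonic Y_n(x), the terms m < n form (1 - t) times a member of
     V_{n-1}(w_{-1,1}); the sum is direct since the second summand vanishes at
     t = 1, where an element of H_n is determined.
   - For the eigenvalue equation, each term t^m J_{n-m}(1 - 2t) Y_m(xi) separates:
     the radial factor satisfies a hypergeometric equation (the Jacobi equation
     for (1 - s) P_k^{(al,1)}), and Y_m restricted to the sphere satisfies
     Delta_0 Y_m = -m(m+d-2) Y_m, which we prove by differentiating the
     0-homogeneous extension |x|^{-m} Y_m(x) along coordinate lines and using
     Euler's identity and Delta Y_m = 0.
   The file proceeds: Jacobi coefficients, Jacobi equations, the integral
   formula for J, local and directional derivatives, homogeneous polynomials,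
   the Laplace--Beltrami eigenvalue, the eigenvalue equation, the decomposition. *)

Section JacobiCoefficients.
Variable R : realType.
Implicit Types (a al be : R).

Definition jcoef al be (n j : nat) : R :=
  poch (al + j%:R + 1) (n - j) * poch (- n%:R) j * poch (n%:R + al + be + 1) j
    / (n`! * j`!)%:R.

Definition jacobi_poly al be n : {poly R} := \poly_(j < n.+1) jcoef al be n j.

Lemma jacobiP_horner al be n u :
  jacobiP al be n u = (jacobi_poly al be n).[(1 - u) / 2].
Proof. by rewrite /jacobiP horner_poly. Qed.

Lemma pochS a n : poch a n.+1 = poch a n * (a + n%:R).
Proof. by rewrite /poch big_ord_recr. Qed.

Lemma pochSl a n : poch a n.+1 = a * poch (a + 1) n.
Proof.
rewrite /poch big_ord_recl addr0; congr (_ * _); apply: eq_bigr => i _.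
by rewrite /= /bump /= add1n -natr1; ring.
Qed.

(* (-n)_j = 0 for j > n: this is what truncates the hypergeometric series. *)
Lemma poch_neg_nat n j : (n < j)%N -> poch (- (n%:R : R)) j = 0.
Proof.
elim: j => // j IH; rewrite ltnS leq_eqVlt => /orP[/eqP nj|nj].
  by rewrite pochS nj addNr mulr0.
by rewrite pochS IH // mul0r.
Qed.

Lemma jcoef_gt al be n j : (n < j)%N -> jcoef al be n j = 0.
Proof. by move=> /poch_neg_nat h; rewrite /jcoef h mulr0 mul0r mul0r. Qed.

Lemma coef_jacobi_poly al be n j : (jacobi_poly al be n)`_j = jcoef al be n j.
Proof. by rewrite /jacobi_poly coef_poly; case: ltnP => // /jcoef_gt ->. Qed.

Lemma jcoef_rec al k j : (j.+1%:R * (j%:R + al + 1)) * jcoef al 1 k j.+1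
   = (j%:R - k%:R) * (j%:R + k%:R + al + 2) * jcoef al 1 k j.
Proof.
have [jk|kj] := ltnP j k; last first.
  rewrite (@jcoef_gt al 1 k j.+1) ?ltnS // mulr0.
  move: kj; rewrite leq_eqVlt => /orP[/eqP->|/jcoef_gt->]; last by rewrite mulr0.
  by rewrite subrr !mul0r.
have [e ->] : exists e, k = (j + e.+1)%N by exists (k - j.+1)%N; lia.
rewrite /jcoef addKn (_ : (j + e.+1 - j.+1 = e)%N); last by rewrite addnS subSS addKn.
rewrite (pochSl (al + j%:R + 1) e) (pochS (- _)) (pochS (_ + al + 1 + 1)) factS !natrM.
have -> : al + j.+1%:R + 1 = al + j%:R + 1 + 1 by rewrite -natr1; ring.
have fact_neq0 m : (m`!%:R : R) != 0 by rewrite pnatr_eq0 -lt0n fact_gt0.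
have h1 := fact_neq0 (j + e.+1); have h2 := fact_neq0 j.
by field; rewrite h1 h2 nat1r pnatr_eq0.
Qed.

Lemma jcoef_shift al k j :
  (al + j%:R + 1) * jcoef (al + 1) 0 k j = (al + k%:R + 1) * jcoef al 1 k j.
Proof.
have [jk|kj] := leqP j k; last by rewrite !jcoef_gt ?mulr0.
have [e ->] : exists e, k = (j + e)%N by exists (k - j)%N; lia.
rewrite /jcoef addKn.
have -> : al + 1 + j%:R + 1 = (al + j%:R + 1) + 1 by ring.
have -> : (j + e)%:R + (al + 1) + 0 + 1 = (j + e)%:R + al + 1 + 1 by ring.
rewrite !mulrA -pochSl pochS natrD; ring.
Qed.

End JacobiCoefficients.

Section JacobiEquations.
Variable R : realType.
Implicit Types (al : R) (p G : {poly R}).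

Definition jpoly1 al k := jacobi_poly al 1 k.
Definition jpoly0 al k := jacobi_poly (al + 1) 0 k.
Definition jpolyJ al k : {poly R} := (1 - 'X) * jpoly1 al k.

Lemma coef_Xderiv p j : ('X * p^`())`_j = p`_j *+ j.
Proof. by rewrite coefXM; case: j => [|j] //=; rewrite coef_deriv. Qed.

Lemma coef_Xderiv2 p j : ('X * p^`()^`())`_j = p`_j.+1 *+ j.+1 *+ j.
Proof. by rewrite coefXM; case: j => [|j] /=; rewrite ?mulr0n // !coef_deriv. Qed.

Lemma coef_XXderiv2 p j : ('X * ('X * p^`()^`()))`_j = p`_j *+ j *+ j.-1.
Proof. by rewrite coefXM; case: j => [|j] /=; rewrite ?mulr0n // coef_Xderiv2. Qed.

(* Coefficientwise, this is jcoef_rec combined with jcoef_shift. *)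
Lemma jpolyJ_deriv al k : 0 <= al -> (jpolyJ al k)^`() = - (k.+1%:R) *: jpoly0 al k.
Proof.
move=> al0; apply/polyP => j.
rewrite coef_deriv coefZ /jpolyJ mulrBl mul1r coefB coefXM /= /jpoly1 /jpoly0.
rewrite !coef_jacobi_poly.
have hj : al + j%:R + 1 != 0 by apply/lt0r_neq0; have : (0:R) <= j%:R by []; lra.
apply: (mulfI hj); apply/eqP; rewrite -subr_eq0; apply/eqP.
have E1 := jcoef_rec al k j; have E2 := jcoef_shift al k j.
set r1 := jcoef al 1 k j.+1 in E1 *; set r0 := jcoef al 1 k j in E1 E2 *.
set p0 := jcoef (al + 1) 0 k j in E2 *; clearbody r1 r0 p0.
transitivity ((j.+1%:R * (j%:R + al + 1) * r1
                - (j%:R - k%:R) * (j%:R + k%:R + al + 2) * r0)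
    + k.+1%:R * ((al + j%:R + 1) * p0 - (al + k%:R + 1) * r0)); first by ring.
by rewrite E1 E2 !subrr mulr0 addr0.
Qed.

Lemma jpoly1_ode al k (r := jpoly1 al k) :
  'X * r^`()^`() - 'X * ('X * r^`()^`()) + (al + 1) *: r^`() - (al + 3) *: ('X * r^`())
   + (k%:R * (k%:R + al + 2)) *: r = 0.
Proof.
apply/polyP => j.
rewrite !(coefD, coefN, coefZ, coef_Xderiv2, coef_XXderiv2, coef_Xderiv, coef_deriv, coef0).
rewrite /r /jpoly1 !coef_jacobi_poly.
have E1 := jcoef_rec al k j.
set r1 := jcoef al 1 k j.+1 in E1 *; set r0 := jcoef al 1 k j in E1 *; clearbody r1 r0.
transitivity (j.+1%:R * (j%:R + al + 1) * r1
              - (j%:R - k%:R) * (j%:R + k%:R + al + 2) * r0); last by rewrite E1 subrr.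
by clear E1; case: j => [|j] /=; ring.
Qed.

Definition hyp_op al (K : R) G : {poly R} :=
  'X * (1 - 'X) * G^`()^`() + (al + 1) *: ((1 - 'X) * G^`()) + (K * (K + al)) *: G.

Lemma hyp_op_jpolyJ al k : hyp_op al k.+1%:R (jpolyJ al k) = 0.
Proof.
have := jpoly1_ode al k; rewrite /hyp_op /jpolyJ !poly.derivE.
set r := jpoly1 al k => ode.
transitivity ((1 - 'X) * ('X * r^`()^`() - 'X * ('X * r^`()^`()) + (al + 1) *: r^`()
   - (al + 3) *: ('X * r^`()) + (k%:R * (k%:R + al + 2)) *: r)); last by rewrite ode mulr0.
by clearbody r; rewrite -!mul_polyC; ring.
Qed.

(* The radial part of D_{-1} on polynomials in t, with eigenvalue parameter nn. *)
Definition radial_op (dd nn : R) P : {poly R} :=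
  'X * (1 - 'X) * P^`()^`() + (dd - 1) *: ((1 - 'X) * P^`()) + nn *: P.

(* Separation of variables: on t^m G the radial operator for the eigenvalue
   (m+K)(m+K+dd-2), minus the spherical eigenvalue m(m+dd-2) divided by t,
   is t^m times the hypergeometric operator with al = 2m + dd - 2. *)
Lemma radial_op_separation (dd : R) (m K : nat) G :
  'X * radial_op dd ((m%:R + K%:R) * (m%:R + K%:R + dd - 2)) ('X^m * G)
   - (m%:R * (m%:R + dd - 2)) *: ('X^m * G)
  = 'X^(m.+1) * hyp_op (2 * m%:R + dd - 2) K%:R G.
Proof.
rewrite /radial_op /hyp_op !poly.derivE -!mul_polyC.
by case: m => [|[|m]] /=; rewrite ?mulr0n ?expr0 ?expr1 ?exprS; ring.
Qed.

End JacobiEquations.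

(* J_{k+1}^{(al,-1)}(1 - 2t) is a nonzero multiple of (1 - t) P_k^{(al,1)}(1 - 2t):
   integrate the derivative formula jpolyJ_deriv by the fundamental theorem of calculus. *)
Section JacobiJ.
Variable R : realType.
Implicit Types (al : R).

Lemma oint_poly (F : {poly R}) (f : R -> R) a b : a <= b ->
  (forall x, F^`().[x] = f x) -> oint a b f = F.[b] - F.[a].
Proof.
move=> ab /funext <-; rewrite /oint ab.
have [<-|neab] := eqVneq a b; first by rewrite set_itv1 Rintegral_set1 subrr.
have {neab}ab : a < b by rewrite lt_neqAle neab.
rewrite /Rintegral (@continuous_FTC2 _ (horner F^`()) (horner F) _ _ ab) //.
- exact/continuous_subspaceT/continuous_horner.
- split; first by move=> x _; exact: derivable_horner.
  + exact/cvg_at_right_filter/continuous_horner.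
  + exact/cvg_at_left_filter/continuous_horner.
- by move=> x _; rewrite -derivE.
Qed.

Definition jnorm al k : R := 2 * jacobiA (al + 1) 0 k / k.+1%:R.

Lemma poch_gt0 (a : R) k : 0 < a -> 0 < poch a k.
Proof. by move=> a0; apply: prodr_gt0 => i _; have : (0:R) <= i%:R by []; lra. Qed.

(* The constant is nonzero, so J_{k+1} and (1 - t) P_k span the same line. *)
Lemma jnorm_neq0 al k : 0 <= al -> jnorm al k != 0.
Proof.
move=> al0; rewrite /jnorm /jacobiA.
have hp : 0 < poch (k%:R + (al + 1) + 0 + 1) k.
  by apply: poch_gt0; have : (0:R) <= k%:R by []; lra.
by rewrite !mulf_neq0 ?invr_neq0 ?expf_neq0 ?pnatr_eq0 // lt0r_neq0.
Qed.

Lemma jacobiJ_jpolyJ al k t : 0 <= al -> 0 <= t <= 1 ->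
  jacobiJ al k.+1 (1 - 2 * t) = jnorm al k * (jpolyJ al k).[t].
Proof.
move=> al0 /andP[t0 t1].
pose s : {poly R} := 2^-1 *: (1 - 'X).
have sE u : s.[u] = (1 - u) / 2.
  by rewrite /s hornerZ hornerD hornerN hornerX hornerC mulrC.
pose F := jnorm al k *: (jpolyJ al k \Po s).
have FE u : F.[u] = jnorm al k * (jpolyJ al k).[(1 - u) / 2].
  by rewrite /F hornerZ horner_comp sE.
have dF u : F^`().[u] = jacobiPhat (al + 1) 0 k u.
  rewrite /F derivZ deriv_comp jpolyJ_deriv // /s derivZ derivB derivX -polyC1 derivC.
  rewrite !hornerZ hornerM !horner_comp hornerZ hornerD hornerN !hornerC sE.
  rewrite hornerZ /jacobiPhat jacobiP_horner /jnorm /jpoly0.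
  have hk : (k.+1%:R : R) != 0 by rewrite pnatr_eq0.
  by field; rewrite nat1r.
have jpolyJ1 : (jpolyJ al k).[1] = 0.
  by rewrite /jpolyJ hornerM hornerD hornerN hornerX hornerC subrr mul0r.
rewrite /jacobiJ (@oint_poly F) ?dF //; last by lra.
rewrite !FE (_ : (1 - (1 - 2 * t)) / 2 = t); last by field.
by rewrite (_ : (1 - -1) / 2 = 1 :> R) ?jpolyJ1 ?mulr0 ?subr0 //; field.
Qed.

End JacobiJ.

Section LocalDerivatives.
Variable R : realType.

Lemma derive1_near (f g : R -> R) a e : 0 < e ->
  (forall r, `|r - a| < e -> f r = g r) -> derive1 f a = derive1 g a.
Proof.
move=> e0 fg; rewrite !derive1E; apply: near_eq_derive.
have near_a : \forall r \near a, `|r - a| < e.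
  by apply/nbhs_ballP; exists e => // r /=; rewrite /ball /= distrC.
by apply: filterS near_a => r /fg.
Qed.

Lemma derive2_near (f g : R -> R) a e : 0 < e ->
  (forall r, `|r - a| < e -> f r = g r) ->
  derive1 (derive1 f) a = derive1 (derive1 g) a.
Proof.
move=> e0 fg; apply: (derive1_near e0) => r hr.
apply: (@derive1_near _ _ _ (e - `|r - a|)); first by rewrite subr_gt0.
move=> s hs; apply: fg.
rewrite (_ : s - a = (s - r) + (r - a)); last by ring.
by apply: (le_lt_trans (ler_normD _ _)); rewrite -ltrBrDr.
Qed.

Variable d : nat.
Implicit Types (f : 'rV[R]_d -> R) (a v : 'rV[R]_d).

Lemma derive_line f a v h :
  derive f (h *: v + a) v = derive1 (fun r => f (r *: v + a)) h.
Proof.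
rewrite /derive /derive1; congr (lim (_ @ 0^')); apply/funext => k /=.
by rewrite scalerDl addrA.
Qed.

Lemma derive2_line f a v :
  derive (fun y => derive f y v) a v = derive1 (derive1 (fun r => f (r *: v + a))) 0.
Proof.
rewrite [LHS]/derive /derive1; congr (lim (_ @ 0^')); apply/funext => k /=.
rewrite derive_line -[in X in _ - X](add0r a) -[in X in _ - X](scale0r v) derive_line.
by rewrite /derive1 !addr0.
Qed.

Lemma laplacian_lines f x :
  laplacian d f x = \sum_(i < d) derive1 (derive1 (fun r => f (r *: evec R i + x))) 0.
Proof. by apply: eq_bigr => i _; rewrite derive2_line. Qed.

End LocalDerivatives.

Section HomogeneousPolynomials.
Variable R : realType.
Variable d : nat.
Implicit Types (Y : 'rV[R]_d -> R) (x : 'rV[R]_d).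

Local Notation exps m := {ffun 'I_d -> 'I_m.+1}.

Definition homog_repr m (c : exps m -> R) Y : Prop :=
  forall x, Y x = \sum_(a : exps m | (\sum_(i < d) (a i : nat))%N == m) c a * monomial a x.

Lemma homogE m Y : homog_poly m Y -> forall (l : R) x, Y (l *: x) = l ^+ m * Y x.
Proof.
case=> c hY l x; rewrite !hY mulr_sumr; apply: eq_bigr => a /eqP ha.
rewrite /monomial.
under eq_bigr => j _ do rewrite mxE exprMn.
by rewrite big_split /= prodrXr ha mulrCA.
Qed.

Definition line_poly m (c : exps m -> R) x (i : 'I_d) : {poly R} :=
  \sum_(a : exps m | (\sum_(j < d) (a j : nat))%N == m)
     c a *: ((\prod_(j < d | j != i) x ord0 j ^+ a j) *: ('X + (x ord0 i)%:P) ^+ a i).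

Lemma line_polyE (m : nat) (c : exps m -> R) Y x i : homog_repr c Y ->
  forall r, Y (r *: evec R i + x) = (line_poly c x i).[r].
Proof.
move=> hY r; rewrite hY /line_poly horner_sum; apply: eq_bigr => a _.
rewrite !hornerZ horner_exp hornerD hornerX hornerC; congr (_ * _).
rewrite /monomial (bigD1 i) //= !mxE !eqxx /= mulr1 mulrC; congr (_ * _).
by apply: eq_bigr => j /negbTE hj; rewrite !mxE /= hj mulr0 add0r.
Qed.

Lemma line_poly_deriv0 (m : nat) (c : exps m -> R) x i :
  (line_poly c x i)^`().[0] =
    \sum_(a : exps m | (\sum_(j < d) (a j : nat))%N == m)
     c a * ((\prod_(j < d | j != i) x ord0 j ^+ a j) * ((a i)%:R * x ord0 i ^+ (a i).-1)).
Proof.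
rewrite /line_poly raddf_sum horner_sum; apply: eq_bigr => a _.
rewrite /= !derivZ deriv_exp derivD derivX derivC addr0 mul1r !hornerZ hornerMn horner_exp.
by rewrite hornerD hornerX hornerC add0r -mulr_natl.
Qed.

Lemma euler_identity (m : nat) (c : exps m -> R) Y x : homog_repr c Y ->
  \sum_(i < d) x ord0 i * (line_poly c x i)^`().[0] = m%:R * Y x.
Proof.
move=> hY; rewrite hY mulr_sumr.
under eq_bigr => i _ do rewrite line_poly_deriv0 mulr_sumr.
rewrite exchange_big /=; apply: eq_bigr => a /eqP ha.
have -> : \sum_(i < d) x ord0 i * (c a * ((\prod_(j < d | j != i) x ord0 j ^+ a j) *
            ((a i)%:R * x ord0 i ^+ (a i).-1)))
        = \sum_(i < d) c a * ((a i)%:R * monomial a x).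
  apply: eq_bigr => i _; rewrite /monomial [\prod_(i0 < d) _](bigD1 i) //=.
  case: (a i : nat) => [|k] /=; first by rewrite !mul0r !mulr0.
  by rewrite exprS; ring.
by rewrite -mulr_sumr -mulr_suml -natr_sum ha; ring.
Qed.

Lemma laplacian_line_poly (m : nat) (c : exps m -> R) Y x : homog_repr c Y ->
  laplacian d Y x = \sum_(i < d) (line_poly c x i)^`()^`().[0].
Proof.
move=> hY; rewrite laplacian_lines; apply: eq_bigr => i _.
have -> : (fun r => Y (r *: evec R i + x)) = horner (line_poly c x i).
  by apply/funext => r; exact: line_polyE.
by rewrite -!derivE.
Qed.

Lemma harmH_scale m Y (k : R) : harmH d m Y -> harmH d m (fun x => k * Y x).
Proof.
case=> [[c hY] hL].
have hkY : homog_repr (fun a => k * c a) (fun x => k * Y x).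
  by move=> x; rewrite hY mulr_sumr; apply: eq_bigr => a _; ring.
split; first by exists (fun a => k * c a).
move=> x; transitivity (k * laplacian d Y x); last by rewrite hL mulr0.
rewrite (laplacian_line_poly x hkY) (laplacian_line_poly x hY) mulr_sumr.
apply: eq_bigr => i _.
have -> : line_poly (fun a => k * c a) x i = k *: line_poly c x i.
  by rewrite /line_poly scaler_sumr; apply: eq_bigr => a _; rewrite -scalerA.
by rewrite !derivZ hornerZ.
Qed.

End HomogeneousPolynomials.

(* Along the line r |-> xi + r e_i through a point xi of the unit sphere,
   |xi + r e_i|^2 = r^2 + 2 c r + 1 with c = xi_i.  We compute the second
   derivative at r = 0 of r |-> |xi + r e_i|^{-m} P(r) for a polynomial P:
   this is the building block of the Laplacian of a 0-homogeneous extension. *)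
Section LinesThroughSphere.
Variable R : realType.
Implicit Types (c r : R) (P : {poly R}).

Definition linesq c : {poly R} := 'X^2 + (2 * c) *: 'X + 1%:P.

Lemma linesqE c r : (linesq c).[r] = r ^+ 2 + 2 * c * r + 1.
Proof. by rewrite /linesq !hornerD hornerZ hornerXn hornerX hornerC. Qed.

Lemma linesq_deriv c r : (linesq c)^`().[r] = 2 * r + 2 * c.
Proof.
rewrite /linesq !derivD derivZ derivXn derivX derivC addr0 hornerD hornerZ hornerMn.
by rewrite hornerX -polyC1 hornerC mulr1 mulr2n; ring.
Qed.

Lemma linesq0 c : (linesq c).[0] = 1.
Proof. by rewrite linesqE; ring. Qed.

Lemma linesq_gt0 c r : c ^+ 2 <= 1 -> -1 < r < 1 -> 0 < (linesq c).[r].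
Proof.
move=> hc /andP[r1 r2]; have [c1 c2] : -1 <= c /\ c <= 1 by split; nra.
rewrite linesqE; have [r0|r0] := leP 0 r; nra.
Qed.

(* |xi + r e_i|^{-1} and the logarithmic derivative of |xi + r e_i|. *)
Definition invnorm c r := (Num.sqrt ((linesq c).[r]))^-1.
Definition logder c r := (c + r) / (linesq c).[r].

Lemma invnorm0 c : invnorm c 0 = 1.
Proof. by rewrite /invnorm linesq0 sqrtr1 invr1. Qed.

Lemma logder0 c : logder c 0 = c.
Proof. by rewrite /logder linesq0 addr0 divr1. Qed.

Lemma is_derive_ext (f g : R -> R) (x df : R) :
  (forall y, f y = g y) -> is_derive x (1:R) f df -> is_derive x (1:R) g df.
Proof. by move=> /funext <-. Qed.

Lemma invnorm_derive c r : c ^+ 2 <= 1 -> -1 < r < 1 ->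
  is_derive r (1:R) (invnorm c) (- logder c r * invnorm c r).
Proof.
move=> hc hr; have S0 := linesq_gt0 hc hr.
have hs : Num.sqrt (linesq c).[r] != 0 by rewrite sqrtr_eq0 -ltNge.
have h1 := is_derive1_comp (is_derive1_sqrt S0) (is_derive_poly (linesq c) r).
apply: is_derive_eq (is_deriveV (f := Num.sqrt \o horner (linesq c)) hs h1) _.
rewrite linesq_deriv /logder /invnorm.
set S := (linesq c).[r] in S0 hs *; set s := Num.sqrt S in hs *.
have -> : S = s ^+ 2 by rewrite sqr_sqrtr // ltW.
by rewrite /GRing.scale /= -/S -/s; field.
Qed.

Lemma invnormX_derive m c r : c ^+ 2 <= 1 -> -1 < r < 1 ->
  is_derive r (1:R) (fun y => invnorm c y ^+ m) (- (m%:R) * logder c r * invnorm c r ^+ m).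
Proof.
move=> hc hr; have h := is_deriveX m (invnorm_derive hc hr).
apply: is_derive_ext (is_derive_eq h _) => [y|]; first by rewrite exprfctE.
case: m {h} => [|m] /=; first by rewrite /GRing.scale /=; ring.
by rewrite exprS /GRing.scale /=; ring.
Qed.

Lemma logder_derive0 c : c ^+ 2 <= 1 -> is_derive (0:R) (1:R) (logder c) (1 - 2 * c ^+ 2).
Proof.
move=> hc.
have S0 : (linesq c).[0] != 0 by rewrite linesq0 oner_neq0.
have hM := is_deriveM (is_derive_poly ('X + c%:P) 0) (is_deriveV S0 (is_derive_poly (linesq c) 0)).
apply: is_derive_ext (is_derive_eq hM _) => [y|].
  change (('X + c%:P).[y] * (linesq c).[y]^-1 = (c + y) / (linesq c).[y]).
  by rewrite hornerD hornerX hornerC addrC.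
rewrite linesq_deriv linesq0 derivD derivX derivC addr0 -polyC1 hornerC hornerD hornerX hornerC.
by rewrite /GRing.scale /=; field.
Qed.

Definition first_deriv m c P r :=
  - (m%:R) * logder c r * invnorm c r ^+ m * P.[r] + invnorm c r ^+ m * P^`().[r].

Definition second_deriv0 m c P :=
  (m%:R * (m%:R + 2) * c ^+ 2 - m%:R) * P.[0] + 2 * (- (m%:R) * c) * P^`().[0]
  + P^`()^`().[0].

Lemma first_deriv_is_derive m c P r : c ^+ 2 <= 1 -> -1 < r < 1 ->
  is_derive r (1:R) (fun y => invnorm c y ^+ m * P.[y]) (first_deriv m c P r).
Proof.
move=> hc hr; have hM := is_deriveM (invnormX_derive m hc hr) (is_derive_poly P r).
by apply: is_derive_ext (is_derive_eq hM _) => [y //|]; rewrite /first_deriv /GRing.scale /=; ring.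
Qed.

Lemma second_deriv0_is_derive m c P : c ^+ 2 <= 1 ->
  is_derive (0:R) (1:R) (first_deriv m c P) (second_deriv0 m c P).
Proof.
move=> hc; have r0 : -1 < (0:R) < 1 by rewrite ltrN10 ltr01.
have hu := invnormX_derive m hc r0.
have h1 := is_deriveM (is_deriveM (logder_derive0 hc) hu) (is_derive_poly P 0).
have h2 := is_deriveM hu (is_derive_poly P^`() 0).
apply: is_derive_ext (is_derive_eq (is_deriveD (is_deriveZ (- (m%:R)) h1) h2) _) => [y|].
  change ((- (m%:R)) * (logder c y * invnorm c y ^+ m * P.[y])
          + invnorm c y ^+ m * P^`().[y] = first_deriv m c P y).
  by rewrite /first_deriv; ring.
rewrite /second_deriv0 /GRing.scale /=.
change ((logder c * (fun y : R => invnorm c y ^+ m)) 0) with (logder c 0 * invnorm c 0 ^+ m).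
by rewrite invnorm0 logder0 expr1n; ring.
Qed.

Lemma derive2_invnorm_sum N (C : 'I_N -> R) (M : 'I_N -> nat) c (P : 'I_N -> {poly R}) :
  c ^+ 2 <= 1 ->
  derive1 (derive1 (fun r => \sum_(k < N) C k * (invnorm c r ^+ M k * (P k).[r]))) 0
  = \sum_(k < N) C k * second_deriv0 (M k) c (P k).
Proof.
move=> hc.
rewrite (@derive1_near _ _ (fun r => \sum_(k < N) C k * first_deriv (M k) c (P k) r) 0 1) ?ltr01 //.
  rewrite derive1E; apply: derive_val.
  apply: is_derive_ext
    (is_derive_sum (fun k => is_deriveZ (C k) (second_deriv0_is_derive (M k) (P k) hc))).
  by move=> y; rewrite fct_sumE.
move=> r; rewrite subr0 ltr_norml => hr.
rewrite derive1E; apply: derive_val.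
apply: is_derive_ext
  (is_derive_sum (fun k => is_deriveZ (C k) (first_deriv_is_derive (M k) (P k) hc hr))).
by move=> y; rewrite fct_sumE.
Qed.

End LinesThroughSphere.

(* The Laplacian of
   the 0-homogeneous extension Y(x/|x|) = |x|^{-m} Y(x) is computed along the
   coordinate lines through xi, then simplified with Euler's identity, the
   harmonicity of Y and |xi| = 1. *)
Section LaplaceBeltrami.
Variable R : realType.
Variable d : nat.
Implicit Types (xi x : 'rV[R]_d).

Lemma sqnorm_line xi (i : 'I_d) r : on_sphere d xi ->
  sqnorm (r *: evec R i + xi) = (linesq (xi ord0 i)).[r].
Proof.
rewrite /on_sphere /sqnorm (bigD1 i) //= => h.
rewrite (bigD1 i) //= !mxE !eqxx /= mulr1 linesqE.
have -> : \sum_(j < d | j != i) (r *: evec R i + xi) ord0 j ^+ 2 = 1 - xi ord0 i ^+ 2.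
  rewrite -h addrAC subrr add0r; apply: eq_bigr => j /negbTE hj.
  by rewrite !mxE /= hj mulr0 add0r.
ring.
Qed.

Lemma coord_sq_le1 xi (i : 'I_d) : on_sphere d xi -> xi ord0 i ^+ 2 <= 1.
Proof.
rewrite /on_sphere /sqnorm (bigD1 i) //= => h.
by rewrite -h lerDl; apply: sumr_ge0 => j _; exact: sqr_ge0.
Qed.

Lemma on_sphere_normalize x : 0 < sqnorm x -> on_sphere d ((enorm x)^-1 *: x).
Proof.
move=> hx; rewrite /on_sphere /sqnorm.
under eq_bigr => j _ do rewrite mxE exprMn.
rewrite -mulr_sumr -/(sqnorm x) /enorm exprVn sqr_sqrtr ?ltW // mulVf //.
by rewrite gt_eqF.
Qed.

Lemma harmonic_line_data m Y xi : harmH d m Y ->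
  exists P : 'I_d -> {poly R},
   [/\ forall i r, Y (r *: evec R i + xi) = (P i).[r],
       \sum_(i < d) xi ord0 i * (P i)^`().[0] = m%:R * Y xi &
       \sum_(i < d) (P i)^`()^`().[0] = 0].
Proof.
case=> [[c hY] hL]; exists (line_poly c xi); split.
- by move=> i r; exact: line_polyE.
- exact: euler_identity.
- by rewrite -(laplacian_line_poly xi hY) hL.
Qed.

Lemma second_deriv0_sum m (Y : 'rV[R]_d -> R) (P : 'I_d -> {poly R}) xi :
  on_sphere d xi ->
  (forall i r, Y (r *: evec R i + xi) = (P i).[r]) ->
  \sum_(i < d) xi ord0 i * (P i)^`().[0] = m%:R * Y xi ->
  \sum_(i < d) (P i)^`()^`().[0] = 0 ->
  \sum_(i < d) second_deriv0 m (xi ord0 i) (P i) = - (m%:R * (m%:R + d%:R - 2)) * Y xi.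
Proof.
move=> hxi hline heuler hlap.
have P0 i : (P i).[0] = Y xi by rewrite -hline scale0r add0r.
rewrite /second_deriv0; under eq_bigr => i _ do rewrite P0.
rewrite !big_split /= -!mulr_suml.
have -> : \sum_(i < d) 2 * (- m%:R * xi ord0 i) * (P i)^`().[0]
   = - (2 * m%:R) * \sum_(i < d) xi ord0 i * (P i)^`().[0].
  by rewrite mulr_sumr; apply: eq_bigr => i _; ring.
rewrite heuler hlap sumrB -mulr_sumr sumr_const card_ord -/(sqnorm xi) hxi.
by rewrite -[m%:R *+ d]mulr_natr; ring.
Qed.

Lemma laplaceBeltrami_harmonic n (C : nat -> R) (Y : nat -> 'rV[R]_d -> R)
    (g : 'rV[R]_d -> R) xi :
  (forall m, (m <= n)%N -> harmH d m (Y m)) -> on_sphere d xi ->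
  (forall y, on_sphere d y -> g y = \sum_(m < n.+1) C m * Y m y) ->
  laplaceBeltrami d g xi =
    \sum_(m < n.+1) C m * (- (m%:R * (m%:R + d%:R - 2))) * Y m xi.
Proof.
move=> hY hxi hg.
have hYm (m : 'I_n.+1) : harmH d m (Y m) by apply: hY; rewrite -ltnS.
have /choice [P hP] m := harmonic_line_data xi (hYm m).
rewrite /laplaceBeltrami laplacian_lines.
transitivity (\sum_(i < d) \sum_(m < n.+1) C m * second_deriv0 m (xi ord0 i) (P m i)).
  apply: eq_bigr => i _; have hc := coord_sq_le1 i hxi.
  rewrite -(derive2_invnorm_sum (fun m : 'I_n.+1 => C m) (fun m => m : nat) _ hc).
  apply: (derive2_near ltr01) => r; rewrite subr0 ltr_norml => hr.
  have hS := sqnorm_line i r hxi.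
  have hS0 : 0 < sqnorm (r *: evec R i + xi) by rewrite hS; exact: linesq_gt0.
  rewrite hg; last exact: on_sphere_normalize.
  apply: eq_bigr => m _; have [hline _ _] := hP m.
  by rewrite (homogE (proj1 (hYm m))) hline /enorm hS.
rewrite exchange_big /=; apply: eq_bigr => m _.
have [hline heuler hlap] := hP m.
by rewrite -mulr_sumr (second_deriv0_sum hxi hline heuler hlap) mulrA.
Qed.

End LaplaceBeltrami.

(* On the cone, Z(t, xi) = sum_m p_m(t) Y_m(xi) with p_m(t) = t^m J_{n-m}(1 - 2t)
   a polynomial; p_m solves the radial equation by radial_op_separation and
   hyp_op_jpolyJ, and Y_m the spherical one by laplaceBeltrami_harmonic. *)
Section Eigenfunctions.
Variable R : realType.
Variable d : nat.
Hypothesis hd : (2 <= d)%N.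

Definition cone_alpha (m : nat) : R := (2 * m + d)%:R - 2.

Lemma cone_alpha_ge0 m : 0 <= cone_alpha m.
Proof. by rewrite /cone_alpha subr_ge0 ler_nat; lia. Qed.

Definition jacobiJ_poly (al : R) (K : nat) : {poly R} :=
  if K is k.+1 then jnorm al k *: jpolyJ al k else 1.

Lemma jacobiJ_polyE al K t : 0 <= al -> 0 <= t <= 1 ->
  jacobiJ al K (1 - 2 * t) = (jacobiJ_poly al K).[t].
Proof.
case: K => [|k] al0 ht; first by rewrite /= -polyC1 hornerC.
by rewrite jacobiJ_jpolyJ // /jacobiJ_poly hornerZ.
Qed.

Lemma hyp_op_jacobiJ_poly al K : hyp_op al K%:R (jacobiJ_poly al K) = 0.
Proof.
case: K => [|k] /=.
  by rewrite /hyp_op -polyC1 derivC deriv0 !mulr0 scaler0 mul0r scale0r !addr0.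
transitivity ((jnorm al k)%:P * hyp_op al k.+1%:R (jpolyJ al k)).
  by rewrite /hyp_op !derivZ -!mul_polyC; ring.
by rewrite hyp_op_jpolyJ mulr0.
Qed.

Definition cone_profile (n m : nat) : {poly R} :=
  'X^m * jacobiJ_poly (cone_alpha m) (n - m).

Lemma cone_profile_radial n m t (P := cone_profile n m) : (m <= n)%N -> t != 0 ->
   t * (1 - t) * P^`()^`().[t] + (d%:R - 1) * (1 - t) * P^`().[t]
     + n%:R * (n%:R + d%:R - 2) * P.[t]
   = t^-1 * (m%:R * (m%:R + d%:R - 2) * P.[t]).
Proof.
move=> mn tn0.
have := radial_op_separation d%:R m (n - m) (jacobiJ_poly (cone_alpha m) (n - m)).
have -> : 2 * m%:R + d%:R - 2 = cone_alpha m by rewrite /cone_alpha natrD natrM.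
rewrite hyp_op_jacobiJ_poly mulr0 -natrD subnKC // -/(cone_profile n m) -/P.
move=> /(congr1 (fun p => p.[t])) /=.
rewrite hornerD hornerN hornerM hornerX hornerZ /radial_op !hornerD !hornerZ !hornerM.
rewrite hornerD hornerN hornerX -polyC1 hornerC horner0 => /eqP.
rewrite subr_eq0 => /eqP E; apply: (mulfI tn0).
by rewrite [RHS]mulrA mulfV // mul1r -E; ring.
Qed.

Lemma Vmm_profile n (Y : nat -> 'rV[R]_d -> R) (Z : R -> 'rV[R]_d -> R) :
  (forall m, (m <= n)%N -> harmH d m (Y m)) ->
  cone_eq d Z (fun t xi => \sum_(m < n.+1)
        jacobiJ ((2 * m + d)%:R - 2) (n - m) (1 - 2 * t) * Y m (t *: xi)) ->
  forall s y, 0 <= s <= 1 -> on_sphere d y ->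
  Z s y = \sum_(m < n.+1) (cone_profile n m).[s] * Y m y.
Proof.
move=> hY hZ s y hs hy; rewrite hZ //; apply: eq_bigr => m _.
have hYm : harmH d m (Y m) by apply: hY; rewrite -ltnS.
rewrite (homogE (proj1 hYm)) hornerM hornerXn.
by rewrite -(jacobiJ_polyE _ (cone_alpha_ge0 m)) //; ring.
Qed.

Lemma Vmm_eigen n (Z : R -> 'rV[R]_d -> R) : Vmm d n Z ->
  forall t xi, 0 < t < 1 -> on_sphere d xi ->
  Dop d (-1) Z t xi = - (n%:R * (n%:R + d%:R - 2)) * Z t xi.
Proof.
case=> Y [hY hZ] t xi /andP[t0 t1] hxi.
have hprof := Vmm_profile hY hZ.
pose Ptot := \sum_(m < n.+1) Y m xi *: cone_profile n m.
have PtotE s : 0 <= s <= 1 -> Z s xi = Ptot.[s].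
  move=> hs; rewrite hprof // horner_sum; apply: eq_bigr => m _.
  by rewrite hornerZ mulrC.
(* near t, the function s |-> Z s xi is the polynomial Ptot *)
have e0 : 0 < Num.min t (1 - t) by rewrite lt_min t0 subr_gt0.
have hnear s : `|s - t| < Num.min t (1 - t) -> Z s xi = Ptot.[s].
  rewrite lt_min !ltr_norml => /andP[] /andP[h1 h2] /andP[h3 h4].
  by apply: PtotE; apply/andP; split; lra.
have ht : 0 <= t <= 1 by apply/andP; split; lra.
rewrite /Dop (derive2_near e0 hnear) (derive1_near e0 hnear) -!derivE.
rewrite (@laplaceBeltrami_harmonic R d n (fun m => (cone_profile n m).[t]) Y _ xi hY hxi
           (hprof t ^~ ht)).
rewrite PtotE // /Ptot !raddf_sum !horner_sum !mulr_sumr -!big_split /=.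
apply: eq_bigr => m _; rewrite !derivZ !hornerZ.
have mn : (m <= n)%N by rewrite -ltnS.
have := cone_profile_radial mn (lt0r_neq0 t0); set P := cone_profile n m => E.
apply/eqP; rewrite -subr_eq0; apply/eqP.
transitivity (Y m xi * ((t * (1 - t) * P^`()^`().[t] + (d%:R - 1) * (1 - t) * P^`().[t]
   + n%:R * (n%:R + d%:R - 2) * P.[t]) - t^-1 * (m%:R * (m%:R + d%:R - 2) * P.[t]))).
  by ring.
by rewrite E subrr mulr0.
Qed.

End Eigenfunctions.

Arguments cone_alpha {R} d m.
Arguments cone_alpha_ge0 {R d} hd m.

(* For m < n the
   radial factor J_{n-m}^{(2m+d-2,-1)}(1 - 2t) equals the nonzero constant
   jnorm times (1 - t) P_{n-1-m}^{(2m+d-2,1)}(1 - 2t), while for m = n it is 1. *)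
Section Decomposition.
Variable R : realType.
Variable d : nat.
Hypothesis hd : (2 <= d)%N.

Lemma jacobiJ_split k m (t : R) : (m <= k)%N -> 0 <= t <= 1 ->
  jacobiJ (cone_alpha d m) (k.+1 - m) (1 - 2 * t)
  = jnorm (cone_alpha d m) (k - m) *
     ((1 - t) * jacobiP (cone_alpha d m) 1 (k - m) (1 - 2 * t)).
Proof.
move=> mk ht; rewrite subSn // jacobiJ_jpolyJ ?cone_alpha_ge0 //.
rewrite /jpolyJ hornerM hornerD hornerN hornerX -polyC1 hornerC jacobiP_horner /jpoly1.
by rewrite (_ : (1 - (1 - 2 * t)) / 2 = t) //; field.
Qed.

(* The sum is direct: a member of (1 - t) V_{n-1} vanishes at t = 1, whereas a
   member of H_n is determined by its values there. *)
Lemma Hcone_second_summand n (W : R -> 'rV[R]_d -> R) :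
  Hcone d n W -> second_summand d n W -> cone_eq d W (fun _ _ => 0).
Proof.
case=> Y [hY hW]; case: n hY hW => [|n'] hY hW //=.
case=> Q [_ hQ] t xi ht hxi.
have h01 : 0 <= (1:R) <= 1 by rewrite ler01 lexx.
have Y0 : Y xi = 0 by have := hW 1 xi h01 hxi; rewrite hQ // subrr mul0r scale1r.
by rewrite hW // (homogE (proj1 hY)) Y0 mulr0.
Qed.

Lemma Vmm_decompose n (Z : R -> 'rV[R]_d -> R) : Vmm d n Z ->
  exists W1 W2, Hcone d n W1 /\ second_summand d n W2 /\
    cone_eq d Z (fun t xi => W1 t xi + W2 t xi).
Proof.
case=> Y [hY hZ]; case: n hY hZ => [|k] hY hZ.
  exists (fun t xi => Y 0%N (t *: xi)), (fun _ _ => 0); split; last split => //.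
    by exists (Y 0%N); split => //; apply: hY.
  by move=> t xi ht hxi; rewrite hZ // big_ord1 /= mul1r addr0.
pose c (m : nat) : R := jnorm (cone_alpha d m) (k - m).
pose Q t xi := \sum_(m < k.+1)
  jacobiP (cone_alpha d m) 1 (k - m) (1 - 2 * t) * (c m * Y m (t *: xi)).
exists (fun t xi => Y k.+1 (t *: xi)), (fun t xi => (1 - t) * Q t xi).
split; last split.
- by exists (Y k.+1); split => //; apply: hY.
- exists Q; split => //; exists (fun m x => c m * Y m x); split => //.
  by move=> m mk; apply: harmH_scale; apply: hY; lia.
- move=> t xi ht hxi; rewrite hZ // big_ord_recr /= subnn mul1r addrC; congr (_ + _).
  rewrite /Q mulr_sumr; apply: eq_bigr => m _.
  have mk : (m <= k)%N by rewrite -ltnS.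
  by rewrite jacobiJ_split // /c; ring.
Qed.

(* Conversely the sum is contained in V_n: rescale the harmonics of the second
   summand by the inverse of the nonzero constants jnorm. *)
Lemma decompose_Vmm n (Z W1 W2 : R -> 'rV[R]_d -> R) :
  Hcone d n W1 -> second_summand d n W2 ->
  cone_eq d Z (fun t xi => W1 t xi + W2 t xi) -> Vmm d n Z.
Proof.
case=> Y0 [hY0 hW1]; case: n hY0 hW1 => [|k] hY0 hW1 hW2 hZ.
  exists (fun _ => Y0); split; first by move=> m; rewrite leqn0 => /eqP ->.
  by move=> t xi ht hxi; rewrite hZ // hW1 // hW2 // big_ord1 /= mul1r addr0.
case: hW2 => Q [[Y [hY hQ]] hW2].
pose c (m : nat) : R := jnorm (cone_alpha d m) (k - m).
exists (fun m => if m == k.+1 then Y0 else (fun x => (c m)^-1 * Y m x)); split.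
  move=> m mk; case: eqP => [-> //|ne].
  by apply: harmH_scale; apply: hY; lia.
move=> t xi ht hxi.
rewrite hZ // hW1 // hW2 // hQ // [in RHS]big_ord_recr /= eqxx subnn mul1r addrC.
congr (_ + _); rewrite mulr_sumr; apply: eq_bigr => m _.
have mk : (m <= k)%N by rewrite -ltnS.
rewrite ifN_eq; last by rewrite neq_ltn ltnS mk.
have cn0 : c m != 0 := jnorm_neq0 (k - m) (cone_alpha_ge0 hd m).
by rewrite jacobiJ_split // -/(c m) -/(cone_alpha d m); field.
Qed.

End Decomposition.

Theorem mainTheorem9 (R : realType) (d n : nat) (hd : (2 <= d)%N) :
  (forall Z : R -> 'rV[R]_d -> R, Vmm d n Z ->
     forall (t : R) xi, 0 < t < 1 -> on_sphere d xi ->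
       Dop d (-1) Z t xi = - (n%:R * (n%:R + d%:R - 2)) * Z t xi)
  /\
  ((forall Z : R -> 'rV[R]_d -> R, Vmm d n Z <->
      exists W1 W2, Hcone d n W1 /\ second_summand d n W2 /\
        cone_eq d Z (fun t xi => W1 t xi + W2 t xi))
   /\
   (forall W : R -> 'rV[R]_d -> R, Hcone d n W -> second_summand d n W -> cone_eq d W (fun _ _ => 0))).
Proof.
split; first exact: Vmm_eigen.
split; last exact: Hcone_second_summand.
move=> Z; split; first exact: Vmm_decompose.
by case=> W1 [W2 [hW1 [hW2 hZ]]]; exact: decompose_Vmm hW1 hW2 hZ.
Qed.
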